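(* Let $ZM(m,n,r)$ be a ZM-group with $m=p^{\alpha}$ and $n=q_1^{\beta_1}q_2^{\beta_2}\cdots q_s^{\beta_s}$, where $p,q_1,\dots,q_s$ are primes ($q_1,\dots,q_s$ distinct) and $\alpha,\beta_1,\dots,\beta_s$ are positive integers. Let $A=\{i\in\{1,\dots,s\} : q_i\mid p-1\}$. If $\alpha\ge \max_{i\in A}\beta_i$, then $ZM(m,n,r)$ is not $\psi$-divisible.
   Context: For a finite group $G$, $\psi(G)=\sum_{x\in G} o(x)$ denotes the sum of the orders of all elements of $G$. A finite group $G$ is called $\psi$-divisible if $\psi(H)$ divides $\psi(G)$ for every subgroup $H$ of $G$. For positive integers $m,n,r$ with $\gcd(m,n)=\gcd(m,r-1)=1$ and $r^n\equiv 1\pmod m$, the ZM-group is $ZM(m,n,r)=\langle a,b \mid a^m=b^n=1,\ b^{-1}ab=a^r\rangle$, a group of order $mn$. *)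

From mathcomp Require Import all_boot all_order all_fingroup.
Set Implicit Arguments. Unset Strict Implicit. Unset Printing Implicit Defensive.
Import GroupScope.

Definition psi (gT : finGroupType) (A : {set gT}) : nat := \sum_(x in A) #[x].

Definition psi_divisible (gT : finGroupType) (G : {group gT}) : Prop :=
  forall H : {group gT}, H \subset G -> psi H %| psi G.

(* G is (isomorphic to) the ZM-group ZM(m,n,r) = <a,b | a^m = b^n = 1, b^-1 a b = a^r>:
   G is generated by a, b satisfying the defining relations and has order m*n
   (the order of the presented group), hence G is isomorphic to it. *)
Definition is_ZM (gT : finGroupType) (G : {group gT}) (m n r : nat) (a b : gT) : Prop :=
  [/\ G :=: <<[set a; b]>>, a ^+ m = 1, b ^+ n = 1, a ^ b = a ^+ r & #|G| = (m * n)%N].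

From mathcomp Require Import all_boot all_order all_fingroup all_solvable zify.
Set Implicit Arguments. Unset Strict Implicit. Unset Printing Implicit Defensive.

(* Let A = <[a]>, of order p^alpha, and split <[b]> = B2 * B1 with |B2| = d, the
   \pi(p-1)-part of n, and |B1| its complement.  The order of r modulo p^alpha
   divides gcd(n, totient (p^alpha)), a \pi(p-1)-number, so B1 centralises A,
   while B2 does not (else r = 1 mod p^alpha).  Thus G = (A B2) x B1 and
   H = A x B1 with coprime factors, and psi(H) | psi(G) forces psi(A) | psi(A B2).
   An element y of B2 acting nontrivially on the cyclic p-group A acts
   fixed-point-freely, so all of A y is conjugate to y and
   psi(A B2) = psi(A) psi(C) + p^alpha (psi(B2) - psi(C)), C = C_B2(A).
   As psi(A) is prime to p, it would divide 0 < psi(B2) - psi(C) < d^2, but the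
   hypothesis on alpha gives d | (p-1)^alpha, so
   d^2 <= (p-1)^(2 alpha) < totient (p^alpha) p^alpha <= psi(A). *)

Lemma logn_prod (I : Type) (r : seq I) (P : pred I) (F : I -> nat) t :
    (forall i, P i -> 0 < F i) ->
  logn t (\prod_(i <- r | P i) F i) = \sum_(i <- r | P i) logn t (F i).
Proof.
move=> F_gt0; suff [] : 0 < \prod_(i <- r | P i) F i /\
    logn t (\prod_(i <- r | P i) F i) = \sum_(i <- r | P i) logn t (F i) by [].
apply: (big_rec2 (fun su pr => 0 < pr /\ logn t pr = su)); first by rewrite logn1.
move=> i su pr Pi [pr_gt0 <-]; rewrite lognM ?muln_gt0 ?F_gt0 ?pr_gt0 //.
Qed.

Lemma logn_prod_primes_exp_le s (q e : 'I_s -> nat) t k :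
    (forall i, prime (q i)) -> injective q -> (forall i, q i = t -> e i <= k) ->
  logn t (\prod_(i < s) q i ^ e i) <= k.
Proof.
move=> q_pr q_inj e_le; rewrite logn_prod => [|i _]; last by rewrite expn_gt0 prime_gt0.
have logn_qe i : logn t (q i ^ e i) = e i * (t == q i) by rewrite lognX logn_prime.
have [i0 qi0_t | no_qt] := pickP (fun i => q i == t); last first.
  by rewrite big1 // => i _; rewrite logn_qe eq_sym no_qt muln0.
rewrite (bigD1 i0) //= big1 => [|i ne_i_i0].
  by rewrite addn0 logn_qe eq_sym qi0_t muln1 e_le //; apply/eqP.
rewrite logn_qe; case: eqP => [t_qi|]; last by rewrite muln0.
by move: ne_i_i0; rewrite (q_inj i i0) ?eqxx // (eqP qi0_t) t_qi.
Qed.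

Lemma partn_dvd_expn n k e :
    0 < k -> (forall t, prime t -> t %| k -> logn t n <= e) -> n`_\pi(k) %| k ^ e.
Proof.
move=> k_gt0 logn_le; apply/dvdn_partP=> [|t /(pnatPpi (part_pnat _ _))].
  exact: part_gt0.
rewrite mem_primes => /and3P[t_pr _ t_dvd_k].
rewrite partn_part => [|u]; last by rewrite !inE => /eqP->; rewrite mem_primes t_pr k_gt0.
rewrite p_part (dvdn_trans (dvdn_exp2l t (logn_le t t_pr t_dvd_k))) //.
exact: dvdn_exp2r.
Qed.

Lemma expn_gcdn_mod r i j m : 0 < i ->
  r ^ i = 1 %[mod m] -> r ^ j = 1 %[mod m] -> r ^ gcdn i j = 1 %[mod m].
Proof.
move=> i_gt0 ri rj; have [u _ /dvdnP[v def_v]] := Bezoutl j i_gt0.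
have: r ^ (gcdn i j + u * j) = 1 %[mod m].
  by rewrite def_v mulnC expnM -modnXm ri modnXm exp1n.
by rewrite expnD [u * j]mulnC expnM -modnMmr -modnXm rj modnXm exp1n modnMmr muln1.
Qed.

Lemma expn_partn_pred_mod p e n r : prime p -> 0 < e -> coprime p n ->
  r ^ n = 1 %[mod p ^ e] -> r ^ n`_\pi(p.-1) = 1 %[mod p ^ e].
Proof.
move=> p_pr e_gt0 co_p_n rn1.
have n_gt0 : 0 < n.
  by rewrite lt0n; apply: contraTneq co_p_n => ->; rewrite /coprime gcdn0 gtn_eqF ?prime_gt1.
have pe_gt1 : 1 < p ^ e by rewrite -(expn0 p) ltn_exp2l ?prime_gt1.
have co_r_pe : coprime r (p ^ e).
  by rewrite -(coprime_pexpl _ _ n_gt0) -coprime_modl rn1 modn_small // coprime1n.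
set g := gcdn n (totient (p ^ e)).
have rg1 : r ^ g = 1 %[mod p ^ e] by apply: expn_gcdn_mod; rewrite ?Euler_exp_totient.
have g_dvd_pred : g %| p.-1.
  have co_g_p : coprime g (p ^ e.-1).
    by rewrite coprimeXr // coprime_sym (coprime_dvdr (dvdn_gcdl _ _)).
  by rewrite -(Gauss_dvdl _ co_g_p) -totient_pfactor ?dvdn_gcdr.
have g_dvd_part : g %| n`_\pi(p.-1).
  have pred_gt0 : 0 < p.-1 by rewrite -subn1 subn_gt0 prime_gt1.
  rewrite -(part_pnat_id (pnat_dvd g_dvd_pred (pnat_pi pred_gt0))).
  exact: partn_dvd (dvdn_gcdl _ _).
by rewrite -(divnK g_dvd_part) mulnC expnM -modnXm rg1 modnXm exp1n.
Qed.

Lemma predn_expn_sq_lt_totient p e : prime p -> 0 < e ->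
  p.-1 ^ e * p.-1 ^ e < totient (p ^ e) * p ^ e.
Proof.
case: e => // e p_pr _; have pred_gt0 : 0 < p.-1 by rewrite -subn1 subn_gt0 prime_gt1.
rewrite totient_pfactor //; apply: ltn_mulr; rewrite ?muln_gt0 ?expn_gt0 ?pred_gt0 ?prime_gt0 //.
  rewrite expnS leq_mul2l; case: e => [|e]; first by rewrite orbT.
  by rewrite leq_exp2r ?leq_pred ?orbT.
by rewrite ltn_exp2r // ltn_predL prime_gt0.
Qed.

Section Psi.

Variable gT : finGroupType.
Implicit Types (A B : {set gT}) (G H K L : {group gT}).
Local Open Scope group_scope.

Lemma psiS A B : A \subset B -> psi A <= psi B.
Proof. by move=> sAB; rewrite /psi [leqRHS](big_setID A) /= (setIidPr sAB) leq_addr. Qed.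

Lemma psi_proper A B : A \proper B -> psi A < psi B.
Proof.
case/properP=> sAB [x Bx notAx]; rewrite /psi [ltnRHS](big_setID A) /= (setIidPr sAB).
by rewrite -addn1 leq_add2l (bigD1 x) ?inE ?Bx ?notAx //= (leq_trans (order_gt0 x)) ?leq_addr.
Qed.

Lemma psi_leq_card_sq H : psi H <= #|H| * #|H|.
Proof.
rewrite /psi -sum_nat_const leq_sum // => x Hx.
exact: dvdn_leq (cardG_gt0 H) (order_dvdG Hx).
Qed.

Lemma psi_gt0 H : 0 < psi H.
Proof. by rewrite /psi (bigD1 1) //= order1. Qed.

Lemma psi_cycle_ge (a : gT) : totient #[a] * #[a] <= psi <[a]>.
Proof.
rewrite totient_gen -sum_nat_const.
apply: leq_trans (psiS (_ : [set x | generator <[a]> x] \subset <[a]>)).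
  by apply/eq_leq/eq_bigr => x; rewrite inE => /generator_order.
by apply/subsetP => x; rewrite inE; apply: cycle_generator.
Qed.

Lemma psi_pgroup_coprime (p : nat) H : p.-group H -> coprime (psi H) #|H|.
Proof.
move=> pH; have [-> | ntH] := eqsVneq H 1; first by rewrite cards1 coprimen1.
have [p_pr _ _] := pgroup_pdiv pH ntH.
rewrite (p'nat_coprime _ pH) // p'natE //.
have p_dvd_nt : p %| \sum_(x in H | x != 1) #[x].
  apply: dvdn_sum => x /andP[Hx ntx].
  have pX : p.-group <[x]> by apply: pgroupS pH; rewrite cycle_subG.
  by have [] := pgroup_pdiv pX; rewrite ?cycle_eq1.
by rewrite /psi (bigD1 1) //= order1 (dvdn_addl 1 p_dvd_nt) dvdn1 gtn_eqF ?prime_gt1.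
Qed.

Lemma psi_mulg_TI H K : H :&: K = 1 ->
  psi (H * K) = \sum_(y in K) \sum_(x in H) #[x * y].
Proof.
move=> tiHK; rewrite /psi (_ : H * K = [set x * y | x in H, y in K]) //.
rewrite curry_imset2X big_imset /= => [|[x1 y1] [x2 y2] /setXP[Hx1 Ky1] /setXP[Hx2 Ky2] /= eq_xy].
  rewrite exchange_big pair_big_dep /=.
  by apply: eq_big => [[x y]|[x y] _]; rewrite ?in_setX.
have eq_u : x2^-1 * x1 = y2 * y1^-1 by rewrite -(mulgK y1 x1) eq_xy !mulgA mulVg mul1g.
have : x2^-1 * x1 \in H :&: K by rewrite inE groupM ?groupV //= eq_u groupM ?groupV.
rewrite tiHK => /set1gP/eqP; rewrite mulg_eq1 => /eqP/invg_inj eq_x.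
by rewrite -eq_x in eq_xy *; rewrite (mulgI _ _ _ eq_xy).
Qed.

Lemma psiM_cent_coprime H K : H \subset 'C(K) -> coprime #|H| #|K| ->
  psi (H * K) = (psi H * psi K)%N.
Proof.
move=> cHK coHK; rewrite psi_mulg_TI ?coprime_TIg // /psi big_distrr /=.
apply: eq_bigr => y Ky; rewrite mulnC big_distrr /=; apply: eq_bigr => x Hx.
rewrite orderM 1?mulnC //; first exact: (centsP cHK).
exact: coprime_dvdl (order_dvdG Hx) (coprime_dvdr (order_dvdG Ky) coHK).
Qed.

Lemma cyclic_pgroup_subG_total (p : nat) H K L :
    cyclic H -> p.-group H -> K \subset H -> L \subset H ->
  (K \subset L) || (L \subset K).
Proof.
move=> cycH pH sKH sLH; rewrite -(cardSg_cyclic cycH sKH sLH) -(cardSg_cyclic cycH sLH sKH).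
rewrite (card_pgroup (pgroupS sKH pH)) (card_pgroup (pgroupS sLH pH)).
by case/orP: (leq_total (logn p #|K|) (logn p #|L|)) => /(dvdn_exp2l p) ->; rewrite ?orbT.
Qed.

Lemma cyclic_pgroup_coprime_cent1_TI (p : nat) H y :
    cyclic H -> p.-group H -> y \in 'N(H) -> coprime #|H| #[y] -> y \notin 'C(H) ->
  'C_H[y] = 1.
Proof.
move=> cycH pH nHy coHy notcHy; rewrite -cent_cycle.
have nHY : <[y]> \subset 'N(H) by rewrite cycle_subG.
have tiR := coprime_abel_cent_TI nHY coHy (cyclic_abelian cycH).
have sRH : [~: H, <[y]>] \subset H by rewrite commg_subl.
have [sRC | sCR] := orP (cyclic_pgroup_subG_total cycH pH sRH (subsetIl H 'C(<[y]>))).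
  case/negP: notcHy; rewrite -cycle_subG centsC; apply/commG1P.
  by rewrite -tiR; apply/esym/setIidPl; apply: subset_trans sRC (subsetIr _ _).
by apply/trivgP; rewrite -tiR subsetI sCR subsetIr.
Qed.

Lemma order_mulg_cent1_TI H y : y \in 'N(H) -> 'C_H[y] = 1 ->
  {in H, forall x, #[x * y] = #[y]}.
Proof.
move=> nHy tiCy x Hx.
have inj_conj : {in H &, injective (conjg y)}.
  move=> w1 w2 Hw1 Hw2 eq_yw; apply/eqP; rewrite eq_mulgV1; apply/eqP/set1gP.
  rewrite -tiCy inE groupM ?groupV //=; apply/cent1P/commute_sym/commgP/conjg_fixP.
  by rewrite conjgM eq_yw conjgK.
have sub_coset : conjg y @: H \subset H :* y.
  apply/subsetP=> _ /imsetP[w Hw ->]; rewrite mem_rcoset.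
  have -> : y ^ w * y^-1 = w^-1 * w ^ y^-1 by rewrite /conjg invgK !mulgA.
  by rewrite groupM ?groupV // memJ_norm ?groupV.
have eq_coset : conjg y @: H = H :* y.
  by apply/eqP; rewrite eqEcard sub_coset card_rcoset (card_in_imset inj_conj) leqnn.
have : x * y \in conjg y @: H by rewrite eq_coset mem_rcoset mulgK.
by case/imsetP=> w _ ->; rewrite orderJ.
Qed.

Lemma psi_cyclic_pgroup_semidirect (p : nat) H K :
    cyclic H -> p.-group H -> H :&: K = 1 -> K \subset 'N(H) -> coprime #|H| #|K| ->
  psi (H * K) = (psi H * psi 'C_K(H) + #|H| * (psi K - psi 'C_K(H)))%N.
Proof.
move=> cycH pH tiHK nHK coHK.
have coHy y : y \in K -> coprime #|H| #[y] by move/order_dvdG/coprime_dvdr; apply.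
have psi_split : psi K = (psi 'C_K(H) + \sum_(y in K | y \notin 'C(H)) #[y])%N.
  by rewrite /psi (bigID (mem 'C(H))) /=; congr (_ + _)%N; apply: eq_bigl => y; rewrite inE.
rewrite psi_mulg_TI // psi_split addKn (bigID (mem 'C(H))) /= !big_distrr /=.
congr (_ + _)%N.
  apply: eq_big => [y|y /andP[Ky cHy]]; first by rewrite inE.
  rewrite /psi big_distrl /=; apply: eq_bigr => x Hx.
  rewrite orderM ?(coprime_dvdl (order_dvdG Hx)) ?coHy //.
  exact/commute_sym/(centP cHy).
apply: eq_bigr => y /andP[Ky notcHy]; rewrite -sum_nat_const; apply: eq_bigr => x Hx.
apply: order_mulg_cent1_TI Hx; first exact: (subsetP nHK).
exact: cyclic_pgroup_coprime_cent1_TI pH (subsetP nHK y Ky) (coHy y Ky) notcHy.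
Qed.

Lemma psi_cyclic_pgroup_semidirect_ndvd (p : nat) H K :
    cyclic H -> p.-group H -> H :&: K = 1 -> K \subset 'N(H) -> coprime #|H| #|K| ->
    ~~ (K \subset 'C(H)) -> #|K| * #|K| < psi H ->
  ~~ (psi H %| psi (H * K)).
Proof.
move=> cycH pH tiHK nHK coHK notcHK small_K.
rewrite (psi_cyclic_pgroup_semidirect cycH pH) // (dvdn_addr _ (dvdn_mulr _ (dvdnn _))).
rewrite Gauss_dvdr ?(psi_pgroup_coprime pH) //.
have ltCK : psi 'C_K(H) < psi K.
  apply: psi_proper; rewrite properEneq subsetIl andbT.
  by apply: contraNneq notcHK => <-; rewrite subsetIr.
rewrite gtnNdvd ?subn_gt0 //; apply: leq_ltn_trans (leq_subr _ _) _.
exact: leq_ltn_trans (psi_leq_card_sq K) small_K.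
Qed.

Lemma psi_mulg_cent_dvd H K L :
    L \subset 'C(H) -> L \subset 'C(K) -> coprime #|H| #|L| -> coprime #|K| #|L| ->
  psi (H * L) %| psi (K * L) -> psi H %| psi K.
Proof.
by move=> cHL cKL coHL coKL; rewrite !psiM_cent_coprime 1?centsC // dvdn_pmul2r ?psi_gt0.
Qed.

Lemma cyclic_pgroup_semidirect_not_psi_divisible (p : nat) G H K L :
    cyclic H -> p.-group H -> H :&: K = 1 -> K \subset 'N(H) -> coprime #|H| #|K| ->
    ~~ (K \subset 'C(H)) -> #|K| * #|K| < psi H ->
    L \subset 'C(H) -> L \subset 'C(K) -> coprime #|H| #|L| -> coprime #|K| #|L| ->
    G :=: H * K * L ->
  ~ psi_divisible G.
Proof.
move=> cycH pH tiHK nHK coHK notcHK small_K cHL cKL coHL coKL defG psiG.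
have nHL : L \subset 'N(H) := subset_trans cHL (cent_sub H).
have sHLG : H <*> L \subset G by rewrite defG norm_joinEr // mulSg ?mulG_subl.
move/negP: (psi_cyclic_pgroup_semidirect_ndvd cycH pH tiHK nHK coHK notcHK small_K); apply.
rewrite -(norm_joinEr nHK); apply: (@psi_mulg_cent_dvd _ _ L) => //.
- by rewrite /= centY subsetI cHL.
- by rewrite /= norm_joinEr // TI_cardMg // coprimeMl coHL.
by rewrite /= norm_joinEr // -defG -(norm_joinEr nHL) psiG.
Qed.

End Psi.

Section ZM.

Variable gT : finGroupType.
Local Open Scope group_scope.

Lemma ZM_structure (G : {group gT}) m n r (a b : gT) :
    0 < m -> 0 < n -> is_ZM G m n r a b ->
  [/\ #[a] = m, #[b] = n, G :=: <[a]> * <[b]>, <[a]> :&: <[b]> = 1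
    & <[b]> \subset 'N(<[a]>)].
Proof.
move=> m_gt0 n_gt0 [defG am1 bn1 ab cardG].
have nAB : <[b]> \subset 'N(<[a]>) by rewrite norms_cycle ab mem_cycle.
have defAB : G :=: <[a]> * <[b]> by rewrite -norm_joinEr // defG /cycle joing_idl joing_idr joingE.
have oa_le : #[a] <= m by rewrite dvdn_leq // order_dvdn am1.
have ob_le : #[b] <= n by rewrite dvdn_leq // order_dvdn bn1.
have card_eq := mul_cardG <[a]> <[b]>; rewrite -defAB cardG -!orderE in card_eq.
have ti_gt0 := cardG_gt0 (<[a]> :&: <[b]>)%G.
have [oa ob ti1] : [/\ #[a] = m, #[b] = n & #|<[a]> :&: <[b]>| = 1%N].
  move: (order_gt0 a) (order_gt0 b) ti_gt0 card_eq oa_le ob_le.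
  by move: #[a] #[b] #|_| => x y c *; split; nia.
by split=> //; apply/eqP; rewrite trivg_card1 ti1.
Qed.

Lemma conjg_expg_pow (a b : gT) r k : a ^ b = a ^+ r -> a ^ (b ^+ k) = a ^+ (r ^ k).
Proof.
move=> ab; elim: k => [|k IHk]; first by rewrite conjg1 expn0.
by rewrite expgSr conjgM IHk conjXg ab -expgM expnS mulnC.
Qed.

Lemma expg_cent1_pow (a b : gT) r k :
  a ^ b = a ^+ r -> (b ^+ k \in 'C[a]) = (r ^ k == 1 %[mod #[a]]).
Proof.
move=> ab; rewrite -eq_expg_mod_order expg1 -(conjg_expg_pow k ab).
by apply/cent1P/eqP => [/commute_sym/commgP/conjg_fixP | /conjg_fixP/commgP/commute_sym].
Qed.

Lemma cycle_coprime_factors (x : gT) d e : #[x] = (d * e)%N -> coprime d e ->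
  [/\ #[x ^+ e] = d, #[x ^+ d] = e & <[x]> = <[x ^+ e]> * <[x ^+ d]>].
Proof.
move=> ox co_de; have := order_gt0 x; rewrite ox muln_gt0 => /andP[d_gt0 e_gt0].
have oxe : #[x ^+ e] = d by rewrite orderXdiv ox ?dvdn_mull // mulnK.
have oxd : #[x ^+ d] = e by rewrite orderXdiv ox ?dvdn_mulr // mulKn.
split=> //; apply/eqP; rewrite eq_sym eqEcard mulG_subG !cycleX /=.
by rewrite TI_cardMg ?coprime_TIg //= -!orderE oxe oxd ?ox.
Qed.

Lemma ZM_pfactor_not_psi_divisible (G : {group gT}) m n r (a b : gT) p e :
    0 < n -> 0 < r -> coprime m n -> coprime m (r - 1) -> (r ^ n = 1 %[mod m])%N ->
    is_ZM G m n r a b -> prime p -> 0 < e -> m = (p ^ e)%N ->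
    n`_\pi(p.-1) %| (p.-1 ^ e)%N ->
  ~ psi_divisible G.
Proof.
move=> n_gt0 r_gt0 co_mn co_mr rn1 ZM p_pr e_gt0 def_m d_dvd.
have m_gt1 : 1 < m by rewrite def_m -(expn0 p) ltn_exp2l ?prime_gt1.
have [oa ob defG tiAB nAB] := ZM_structure (ltnW m_gt1) n_gt0 ZM.
have [_ _ _ ab _] := ZM.
set d := (n`_\pi(p.-1))%N in d_dvd; set d' := (n`_\pi(p.-1)^')%N.
have [obd' obd defB] : [/\ #[b ^+ d'] = d, #[b ^+ d] = d' & <[b]> = <[b ^+ d']> * <[b ^+ d]>].
  by apply: cycle_coprime_factors; rewrite ?coprime_partC // ob partnC.
have rd1 : r ^ d = 1 %[mod m].
  by rewrite def_m expn_partn_pred_mod // -?def_m // -(coprime_pexpl _ _ e_gt0) -def_m.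
have cAB1 : <[b ^+ d]> \subset 'C(<[a]>).
  by rewrite cycle_subG /= cent_cycle (expg_cent1_pow _ ab) oa rd1.
have notcAB2 : ~~ (<[b ^+ d']> \subset 'C(<[a]>)).
  rewrite cycle_subG /= cent_cycle (expg_cent1_pow _ ab) oa; apply: contraL co_mr => /eqP rd'1.
  have := expn_gcdn_mod (part_gt0 _ _) rd1 rd'1; rewrite (eqP (coprime_partC _ _ _)) expn1 => r1.
  have m_dvd : m %| r - 1 by rewrite -eqn_mod_dvd // r1.
  by rewrite /coprime (gcdn_idPl m_dvd) gtn_eqF.
have pA : p.-group <[a]> by rewrite /pgroup -orderE oa def_m pnatX pnat_id.
have small_B2 : #|<[b ^+ d']>| * #|<[b ^+ d']>| < psi <[a]>.
  have d_le : d <= p.-1 ^ e by rewrite dvdn_leq ?expn_gt0 // -subn1 subn_gt0 prime_gt1.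
  rewrite -orderE obd'; apply: leq_ltn_trans (leq_mul d_le d_le) _.
  by apply: leq_trans (predn_expn_sq_lt_totient p_pr e_gt0) _; rewrite -def_m -oa psi_cycle_ge.
apply: (cyclic_pgroup_semidirect_not_psi_divisible (cycle_cyclic a) pA _ _ _ notcAB2 small_B2 cAB1).
- by apply/trivgP; rewrite -tiAB setIS ?cycleX.
- exact: subset_trans (cycleX b d') nAB.
- by rewrite -!orderE oa obd' (coprime_dvdr (dvdn_part _ _)).
- by rewrite cycle_subG /= cent_cycle; apply/cent1P/commuteX2.
- by rewrite -!orderE oa obd (coprime_dvdr (dvdn_part _ _)).
- by rewrite -!orderE obd obd' coprime_partC.
by rewrite defG defB mulgA.
Qed.

End ZM.

Theorem proposition2p4 (gT : finGroupType) (G : {group gT}) (a b : gT)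
    (m n r p alpha s : nat) (q beta : 'I_s -> nat) :
    0 < m -> 0 < n -> 0 < r ->
    coprime m n -> coprime m (r - 1) -> r ^ n = 1 %[mod m] ->
    is_ZM G m n r a b ->
    prime p -> 0 < alpha -> m = p ^ alpha ->
    (forall i, prime (q i)) -> injective q -> (forall i, 0 < beta i) ->
    n = \prod_(i < s) q i ^ beta i ->
    \max_(i < s | q i %| p.-1) beta i <= alpha ->
    ~ psi_divisible G.
Proof.
move=> _ n_gt0 r_gt0 co_mn co_mr rn1 ZM p_pr alpha_gt0 def_m q_pr q_inj _ def_n max_le.
apply: (ZM_pfactor_not_psi_divisible n_gt0 r_gt0 co_mn co_mr rn1 ZM p_pr alpha_gt0 def_m).
apply: partn_dvd_expn => [|t _ t_dvd]; first by rewrite -subn1 subn_gt0 prime_gt1.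
rewrite def_n logn_prod_primes_exp_le // => i qi_t.
by apply: leq_trans max_le; apply: leq_bigmax_cond; rewrite qi_t.
Qed.
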